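(* Let $p>2$ be a prime and $d>0$ an integer. Suppose $-1\in QR_p$ and $\epsilon\in QNR_p$, where $\epsilon\in\mathbb{Z}_p^*$ satisfies $\epsilon^2\equiv-1\pmod p$. Let $n_1$ be the number of distinct values $y^4\in\mathbb{Z}_p^*$ for which $y^4-1\equiv x^2\pmod p$ has a solution with $x^2\in\mathbb{Z}_p^*$, and let $n_2$ be the number of distinct values $y^4\in\mathbb{Z}_p^*$ for which $y^4+1\equiv x^2\pmod p$ has a solution with $x^2\in\mathbb{Z}_p^*$. Then $$n_1+n_2=\frac{p-5}{4}.$$
   Context: $\mathbb{Z}_p^*=\{1,\dots,p-1\}$ is the multiplicative group modulo $p$. $QR_p=\{x\in\mathbb{Z}_p^*: \exists y\in\mathbb{Z}_p^*,\ y^2\equiv x \pmod p\}$ is the set of nonzero quadratic residues modulo $p$ and $QNR_p=\mathbb{Z}_p^*\setminus QR_p$ the set of quadratic nonresidues. *)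

From mathcomp Require Import all_boot all_order all_algebra.
Set Implicit Arguments. Unset Strict Implicit. Unset Printing Implicit Defensive.
Import GRing.Theory.
Local Open Scope ring_scope.

(* Z_p^* is modelled by the nonzero elements of 'F_p (p prime). *)
Definition QR (p : nat) (a : 'F_p) : bool :=
  (a != 0) && [exists y : 'F_p, (y != 0) && (y ^+ 2 == a)].
Definition QNR (p : nat) (a : 'F_p) : bool := (a != 0) && ~~ QR a.

Definition n1 (p : nat) : nat :=
  #|[set z : 'F_p | [exists y : 'F_p, (y != 0) && (z == y ^+ 4)] &&
                    [exists x : 'F_p, (x ^+ 2 != 0) && (z - 1 == x ^+ 2)]]|.
Definition n2 (p : nat) : nat :=
  #|[set z : 'F_p | [exists y : 'F_p, (y != 0) && (z == y ^+ 4)] &&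
                    [exists x : 'F_p, (x ^+ 2 != 0) && (z + 1 == x ^+ 2)]]|.

From mathcomp Require Import all_boot all_order all_algebra.
From mathcomp Require Import fingroup cyclic ring.

(* Since [eps] is a nonsquare with [eps^2 = -1], for every nonzero square [w]
   exactly one of [w] and [-w] is a fourth power, and [-1] is a square. Hence
   [n1 + n2] is the number of [w] such that [w] and [w - 1] are both nonzero
   squares ([z] is sent to [-z] in [n2]). Each such [w = a^2 = b^2 + 1] gives
   the four points [(+-a, +-b)] of the hyperbola [u^2 - v^2 = 1] with [uv <> 0].
   The whole hyperbola is parametrised by [t = u - v] in [F^*], and [u = 0] or
   [v = 0] exactly when [t^4 = 1], i.e. [t] is one of [+-1, +-eps]; so
   [4 (n1 + n2) = (p - 1) - 4]. *)

Set Implicit Arguments. Unset Strict Implicit. Unset Printing Implicit Defensive.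
Import GRing.Theory.
Local Open Scope ring_scope.

Section Squares.
Variable F : finFieldType.

Definition is_square (x : F) := [exists y, y ^+ 2 == x].
Definition nonzero_square (x : F) := (x != 0) && is_square x.
Definition nonzero_fourth_power (z : F) := [exists y, (y != 0) && (z == y ^+ 4)].

Lemma is_squareP x : reflect (exists y, y ^+ 2 = x) (is_square x).
Proof. by apply: (iffP existsP) => -[y /eqP]; exists y. Qed.

Lemma nonzero_fourth_powerP z :
  reflect (exists2 y, y != 0 & z = y ^+ 4) (nonzero_fourth_power z).
Proof.
apply: (iffP existsP) => [[y /andP[y0 /eqP]]|[y y0 ->]]; first by exists y.
by exists y; rewrite y0 eqxx.
Qed.

Lemma sqr_eq_neq0 (s v : F) : s ^+ 2 = v -> v != 0 -> s != 0.
Proof. by move=> <-; apply: contraNneq => ->; rewrite expr0n. Qed.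

Lemma fourth_power_square z : nonzero_fourth_power z -> nonzero_square z.
Proof.
case/nonzero_fourth_powerP => y y0 ->; rewrite /nonzero_square expf_neq0 //=.
by apply/is_squareP; exists (y ^+ 2); rewrite -exprM.
Qed.

Lemma exists_nonzero_sqr c :
  [exists x, (x ^+ 2 != 0) && (c == x ^+ 2)] = nonzero_square c.
Proof.
apply/existsP/andP => [[x /andP[x0 /eqP ->]]|[c0 /is_squareP[x hx]]].
  by split=> //; apply/is_squareP; exists x.
by exists x; rewrite hx c0 eqxx.
Qed.

Lemma unit_generator : exists g : F, forall x, x != 0 -> exists k, x = g ^+ k.
Proof.
have /cyclicP [g Hg] := field_unit_group_cyclic [set: {unit F}]%G.
exists (val g) => x x0.
have ux : x \is a GRing.unit by rewrite unitfE.
have : FinRing.unit F ux \in <[g]>%g by rewrite -Hg inE.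
by case/cycleP => k Hk; exists k; rewrite -FinRing.val_unitX -Hk.
Qed.

Lemma mul_nonsquare x y : x != 0 -> y != 0 ->
  ~~ is_square x -> ~~ is_square y -> is_square (x * y).
Proof.
have [g gen] := unit_generator.
have square_even k : ~~ odd k -> is_square (g ^+ k).
  move=> /negbTE ev; apply/is_squareP; exists (g ^+ k./2).
  by rewrite -exprM -{2}(odd_double_half k) ev add0n -muln2 mulnC.
move=> /gen[i ->] /gen[j ->] /(contra (square_even i)) oi /(contra (square_even j)) oj.
by rewrite -exprD square_even // oddD (negbNE oi) (negbNE oj).
Qed.

Lemma neq_opp (a : F) : 2 != 0 :> F -> a != 0 -> a != - a.
Proof. by move=> two a0; rewrite -addr_eq0 -mulr2n -mulr_natr mulf_neq0. Qed.

Lemma card_sqr_eq (a : F) : 2 != 0 :> F -> a != 0 ->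
  #|[set u | u ^+ 2 == a ^+ 2]| = 2%N.
Proof.
move=> two a0; have -> : [set u | u ^+ 2 == a ^+ 2] = [set a; - a].
  by apply/setP => u; rewrite !inE eqf_sqr.
by rewrite cards2 neq_opp.
Qed.

Definition consec_squares := [set w | nonzero_square w && nonzero_square (w - 1)].

End Squares.

Section FourthPowers.
Variables (F : finFieldType) (eps : F).
Hypotheses (eps_sqr : eps ^+ 2 = -1) (eps_nonsquare : ~~ is_square eps).

Lemma eps_neq0 : eps != 0.
Proof.
by apply: contraNneq eps_nonsquare => ->; apply/is_squareP; exists (0 : F); rewrite expr0n.
Qed.

Lemma is_squareN (x : F) : is_square (- x) = is_square x.
Proof.
have sqN (z : F) : is_square z -> is_square (- z).
  case/is_squareP => y <-; apply/is_squareP; exists (eps * y).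
  by rewrite exprMn eps_sqr mulN1r.
by apply/idP/idP => /sqN; rewrite ?opprK.
Qed.

Lemma nonzero_squareN (x : F) : nonzero_square (- x) = nonzero_square x.
Proof. by rewrite /nonzero_square is_squareN oppr_eq0. Qed.

Lemma fourth_powerN (w : F) : nonzero_square w ->
  nonzero_fourth_power (- w) = ~~ nonzero_fourth_power w.
Proof.
case/andP => w0 /is_squareP [u wE].
have u0 := sqr_eq_neq0 wE w0.
apply/idP/idP.
  case/nonzero_fourth_powerP => x x0 xE; apply/negP => /nonzero_fourth_powerP [y y0 yE].
  have : ((y / x) ^+ 2) ^+ 2 = eps ^+ 2.
    by rewrite eps_sqr -exprM expr_div_n -yE -[w]opprK xE mulNr divff ?expf_neq0.
  move/eqP; rewrite eqf_sqr => /orP[] /eqP yxE; move: eps_nonsquare.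
    by rewrite -yxE; apply/negP/negPn/is_squareP; exists (y / x).
  by rewrite -is_squareN -yxE; apply/negP/negPn/is_squareP; exists (y / x).
(* With [w = u^2], either [u] or [eps u] is a square [s^2], so [w] or [-w] is [s^4]. *)
case: (boolP (is_square u)) => [/is_squareP [s sE] | nu] notw.
  case/negP: notw; apply/nonzero_fourth_powerP; exists s; first exact: sqr_eq_neq0 sE u0.
  by rewrite -wE -sE -exprM.
have /is_squareP [s sE] := mul_nonsquare eps_neq0 u0 eps_nonsquare nu.
apply/nonzero_fourth_powerP; exists s; first exact: sqr_eq_neq0 sE (mulf_neq0 eps_neq0 u0).
by rewrite -wE (exprM s 2 2) sE exprMn eps_sqr mulN1r.
Qed.

Lemma card_fourth_powers_consec_squares :
  addn #|[set z : F | nonzero_fourth_power z && nonzero_square (z - 1)]|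
       #|[set z : F | nonzero_fourth_power z && nonzero_square (z + 1)]|
  = #|consec_squares F|.
Proof.
rewrite -(cardsID [set z | nonzero_fourth_power z] (consec_squares F)).
congr (_ + _)%N.
  apply: eq_card => z; rewrite !inE.
  by case: (boolP (nonzero_fourth_power z)) => [/fourth_power_square -> | _];
    rewrite ?andbT ?andbF.
rewrite -(card_preimset _ (@oppr_inj F)); apply: eq_card => w; rewrite !inE.
have F4N : nonzero_fourth_power (- w) = nonzero_square w && ~~ nonzero_fourth_power w.
  case: (boolP (nonzero_square w)) => [/fourth_powerN // | nqw].
  by apply: contraNF nqw => /fourth_power_square; rewrite nonzero_squareN.
rewrite -[- w + 1]opprK opprD opprK nonzero_squareN F4N -!andbA.
by case: (nonzero_fourth_power w); rewrite /= ?andbF.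
Qed.

End FourthPowers.

Section Hyperbola.
Variable F : finFieldType.
Hypothesis two : 2 != 0 :> F.

Definition hyperbola_off_axes :=
  [set x : F * F | (x.1 != 0) && (x.2 != 0) && (x.1 ^+ 2 - x.2 ^+ 2 == 1)].

Lemma hyperbola_sqr_consec_squares x :
  x \in hyperbola_off_axes -> x.1 ^+ 2 \in consec_squares F.
Proof.
case: x => u v; rewrite !inE /= => /andP[/andP[u0 v0] /eqP uvE].
have -> : u ^+ 2 - 1 = v ^+ 2 by rewrite -uvE opprB addrC subrK.
rewrite /nonzero_square !expf_neq0 //=.
by apply/andP; split; apply/is_squareP; [exists u | exists v].
Qed.

Lemma hyperbola_fiber (a b : F) : a != 0 -> b != 0 -> a ^+ 2 - b ^+ 2 = 1 ->
  [set x in hyperbola_off_axes | x.1 ^+ 2 == a ^+ 2]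
  = setX [set u | u ^+ 2 == a ^+ 2] [set v | v ^+ 2 == b ^+ 2].
Proof.
move=> a0 b0 abE; apply/setP => -[u v]; rewrite !inE /=.
apply/idP/idP => [/andP[/andP[_ /eqP uvE] /eqP uE] | /andP[/eqP uE /eqP vE]].
  rewrite uE eqxx /=; apply/eqP/oppr_inj/(addrI (a ^+ 2)).
  by rewrite abE -uE uvE.
rewrite uE vE abE !eqxx !andbT.
by rewrite (sqr_eq_neq0 uE) ?(sqr_eq_neq0 vE) ?expf_neq0.
Qed.

Lemma card_hyperbola_off_axes :
  #|hyperbola_off_axes| = (4 * #|consec_squares F|)%N.
Proof.
rewrite -sum1_card (partition_big (fun x : F * F => x.1 ^+ 2) (mem (consec_squares F)))
  /=; last exact: hyperbola_sqr_consec_squares.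
rewrite mulnC -sum_nat_const; apply: eq_bigr => w.
rewrite inE => /andP[/andP[w0 /is_squareP[a aE]] /andP[w1 /is_squareP[b bE]]].
have a0 := sqr_eq_neq0 aE w0; have b0 := sqr_eq_neq0 bE w1.
rewrite sum1dep_card -aE (hyperbola_fiber a0 b0) ?cardsX ?card_sqr_eq //.
by rewrite aE bE opprB addrC subrK.
Qed.

Definition hyperbola_param (t : F) := ((t + t^-1) / 2, (t^-1 - t) / 2).

Lemma hyperbola_param_sub t :
  t != 0 -> (hyperbola_param t).1 - (hyperbola_param t).2 = t.
Proof. by move=> t0; rewrite /=; field; rewrite two. Qed.

Lemma hyperbola_param_eq t :
  t != 0 -> (hyperbola_param t).1 ^+ 2 - (hyperbola_param t).2 ^+ 2 = 1.
Proof. by move=> t0; rewrite /=; field; rewrite two t0. Qed.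

Lemma hyperbola_param1_eq0 t : t != 0 -> ((hyperbola_param t).1 == 0) = (t ^+ 2 == -1).
Proof.
move=> t0; rewrite /= mulf_eq0 invr_eq0 (negbTE two) orbF -(mulrI_eq0 _ (mulfI t0)).
by rewrite mulrDr mulfV // -expr2 addr_eq0.
Qed.

Lemma hyperbola_param2_eq0 t : t != 0 -> ((hyperbola_param t).2 == 0) = (t ^+ 2 == 1).
Proof.
move=> t0; rewrite /= mulf_eq0 invr_eq0 (negbTE two) orbF -(mulrI_eq0 _ (mulfI t0)).
by rewrite mulrBr mulfV // -expr2 subr_eq0 eq_sym.
Qed.

Lemma hyperbola_paramK (x : F * F) : x.1 ^+ 2 - x.2 ^+ 2 = 1 ->
  x.1 - x.2 != 0 /\ hyperbola_param (x.1 - x.2) = x.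
Proof.
case: x => u v /= uvE; have uvM : (u - v) * (u + v) = 1 by rewrite -subr_sqr.
have t0 : u - v != 0 by apply: contra_eq_neq uvM => ->; rewrite mul0r eq_sym oner_neq0.
have invE : (u - v)^-1 = u + v by rewrite -[_^-1]mulr1 -uvM mulKf.
by split=> //; rewrite /hyperbola_param invE; congr (_, _); field.
Qed.

Lemma hyperbola_off_axes_image : hyperbola_off_axes
  = hyperbola_param @: [set t | (t != 0) && (t ^+ 2 != 1) && (t ^+ 2 != -1)].
Proof.
apply/setP => x; apply/idP/imsetP.
  rewrite inE => /andP[/andP[x1 x2] /eqP xE]; have [t0 tK] := hyperbola_paramK xE.
  exists (x.1 - x.2); last by rewrite tK.
  by rewrite inE t0 -(hyperbola_param1_eq0 t0) -(hyperbola_param2_eq0 t0) tK x1 x2.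
case=> t; rewrite inE => /andP[/andP[t0 t1] tN1] ->.
by rewrite inE hyperbola_param1_eq0 // hyperbola_param2_eq0 // t1 tN1 hyperbola_param_eq ?eqxx.
Qed.

Lemma card_hyperbola_off_axes_param (eps : F) :
  eps ^+ 2 = -1 -> #|hyperbola_off_axes| = (#|F| - 5)%N.
Proof.
move=> eps_sqr; rewrite hyperbola_off_axes_image card_in_imset; last first.
  move=> s t; rewrite !inE => /andP[/andP[s0 _] _] /andP[/andP[t0 _] _] stE.
  by rewrite -(hyperbola_param_sub s0) -(hyperbola_param_sub t0) stE.
have -> : [set t | (t != 0) && (t ^+ 2 != 1) && (t ^+ 2 != -1)]
          = ~: [set x in [:: 0; 1; -1; eps; - eps]].
  have sqrf_eqN1 (t : F) : (t ^+ 2 == -1) = (t == eps) || (t == - eps).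
    by rewrite -eps_sqr eqf_sqr.
  by apply/setP => t; rewrite !inE sqrf_eq1 sqrf_eqN1 !negb_or !andbA.
rewrite cardsCs setCK cardsE; congr (_ - _)%N; apply/card_uniqP.
have o1 : (1 : F) != -1 := neq_opp two (oner_neq0 F).
have e0 : eps != 0 by apply: contra_eq_neq eps_sqr => ->; rewrite expr0n eq_sym oppr_eq0 oner_eq0.
have e1 : eps != 1 by apply: contra_eq_neq eps_sqr => ->; rewrite expr1n.
have eN1 : eps != -1 by apply: contra_eq_neq eps_sqr => ->; rewrite sqrrN expr1n.
rewrite /= !inE !negb_or !(eq_sym 0) !oppr_eq0 oner_eq0 e0 o1 neq_opp //.
by rewrite eqr_opp -eqr_oppLR !(eq_sym _ eps) e1 eN1.
Qed.

End Hyperbola.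

Theorem lemma6 (p d : nat) (eps : 'F_p) :
  prime p -> (2 < p)%N -> (0 < d)%N ->
  QR (-1 : 'F_p) -> eps ^+ 2 = -1 -> QNR eps ->
  (4 * (n1 p + n2 p) = p - 5)%N.
Proof.
move=> p_pr p_gt2 _ _ eps_sqr /andP[eps0 eps_nqr].
have two : 2 != 0 :> 'F_p.
  by rewrite -(dvdn_pcharf (pchar_Fp p_pr)) gtnNdvd.
have eps_nonsquare : ~~ is_square eps.
  apply: contra eps_nqr => /is_squareP[y yE]; rewrite /QR eps0 /=.
  by apply/existsP; exists y; rewrite yE eqxx andbT (sqr_eq_neq0 yE).
have n1E : n1 p = #|[set z : 'F_p | nonzero_fourth_power z && nonzero_square (z - 1)]|.
  by apply: eq_card => z; rewrite !inE exists_nonzero_sqr.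
have n2E : n2 p = #|[set z : 'F_p | nonzero_fourth_power z && nonzero_square (z + 1)]|.
  by apply: eq_card => z; rewrite !inE exists_nonzero_sqr.
rewrite n1E n2E (card_fourth_powers_consec_squares eps_sqr eps_nonsquare).
by rewrite -(card_hyperbola_off_axes two) (card_hyperbola_off_axes_param two eps_sqr) card_Fp.
Qed.
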